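(* Let $d>0$ be fixed. For every integer $N>d$ put $p=d/N$ and let $D_N(i,j)$, $S_N(i,j)$ ($1\le i,j\le N$) be the mean-field node-based quantities defined in the context. Let $\tilde{\mathcal D}_N:[0,1)^2\to\mathbb R$ be the scaled function defined in the context. Then, as $N\to\infty$, $\tilde{\mathcal D}_N$ converges uniformly on $[0,1)^2$ to $$\mathcal D_\infty(\alpha,\beta)=\frac{d\,e^{d|\beta-\alpha|}}{\bigl(1-e^{-d\min(\alpha,\beta)}+e^{d|\beta-\alpha|}\bigr)^2}.$$ Equivalently, $\mathcal D_\infty(\alpha,\beta)=\dfrac{d\,e^{d(\beta-\alpha)}}{(1-e^{-d\alpha}+e^{d(\beta-\alpha)})^2}$ for all $(\alpha,\beta)$; this expression is symmetric in $(\alpha,\beta)$.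
   Context: Mean-field node-based recursion: fix $N$ and $p\in(0,1]$. For $i,j\in\{1,\dots,N\}$ define $D_N(i,j)$ and $S_N(i,j)$ jointly by $S_N(i,j)=1-\sum_{k=1}^{j-1}D_N(i,k)$, $D_N(i,i)=0$, and $D_N(i,j)=p\,S_N(i,j)\,S_N(j,i)$ for $i\ne j$. (This is well defined by induction on $i+j$, since $S_N(i,j)$ only involves $D_N(i,k)$ with $k<j$.) For $\alpha\in[0,1)$ write $i_N(\alpha)=\lfloor N\alpha\rfloor+1\in\{1,\dots,N\}$. The scaled function is $\tilde{\mathcal D}_N(\alpha,\beta)=N\,D_N(i_N(\alpha),i_N(\beta))$ if $\lfloor N\alpha\rfloor\neq\lfloor N\beta\rfloor$, and $\tilde{\mathcal D}_N(\alpha,\beta)=N p\,S_N(i_N(\alpha),i_N(\alpha))^2$ otherwise. Here $p=d/N$. *)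

From Stdlib Require Import Reals Lra Lia Arith ZArith.
Open Scope R_scope.

Fixpoint sumR (f : nat -> R) (m : nat) : R :=
  match m with
  | O => 0
  | S m' => sumR f m' + f (S m')
  end.

(* Fuel-based unfolding of the recursion, indices 1-based.
   All recursive calls D(i,k), k<j, and D(j,k), k<i, have index sum < i+j,
   so fuel i+j suffices (the value is independent of extra fuel). *)
Fixpoint D_fuel (fuel : nat) (p : R) (i j : nat) : R :=
  match fuel with
  | O => 0
  | S n =>
      if Nat.eqb i j then 0
      else p * (1 - sumR (fun k => D_fuel n p i k) (j - 1))
             * (1 - sumR (fun k => D_fuel n p j k) (i - 1))
  end.

Definition Dmf (p : R) (i j : nat) : R := D_fuel (i + j) p i j.

Definition Smf (p : R) (i j : nat) : R := 1 - sumR (fun k => Dmf p i k) (j - 1).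

Definition fl (N : nat) (a : R) : nat := Z.to_nat (Int_part (INR N * a)).

Definition iN (N : nat) (a : R) : nat := (fl N a + 1)%nat.

Definition Dtilde (d : R) (N : nat) (a b : R) : R :=
  let p := d / INR N in
  if Nat.eqb (fl N a) (fl N b)
  then INR N * p * (Smf p (iN N a) (iN N a))^2
  else INR N * Dmf p (iN N a) (iN N b).

Definition Dinf (d a b : R) : R :=
  d * exp (d * Rabs (b - a)) /
  (1 - exp (- d * Rmin a b) + exp (d * Rabs (b - a)))^2.

(** Writing [surv p i j] for the survival quantity [S(i+1, j+1)], the
    recursion becomes multiplicative: [surv p i (j+1) = surv p i j] if [i = j]
    and [surv p i j * (1 - p * surv p j i)] otherwise.  With
    [frac x y = x / (x + y - 1)] and the geometric grid [g_k = (1-p)^{-k}],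
    the explicit function [approx p i j = frac g_i g_j] (second index shifted
    by one above the diagonal) satisfies the same recursion exactly above the
    diagonal and up to [O(p^2)] below it.  A discrete Gronwall induction on
    [i + j] bounds [|surv - approx|] by [budget p (i+j) = O(p e^{(i+j) p})].
    Since [g_k] is within [O(p)] of [e^{k p}] and [frac] is 1-Lipschitz,
    [surv p (floor(N a)) (floor(N b))] is within [O(1/N)] of
    [frac (e^{d a}) (e^{d b})], uniformly on [[0,1)^2].  Finally both [Dtilde]
    and [Dinf] are [d] times a product of two such survival functions, which
    gives the explicit rate [Dtilde_error] and hence the theorem. *)

From Stdlib Require Import Reals Lra Lia ZArith.
Open Scope R_scope.

Lemma sumR_ext (f g : nat -> R) (m : nat) :
  (forall k, (1 <= k <= m)%nat -> f k = g k) -> sumR f m = sumR g m.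
Proof.
  induction m as [|m IH]; intros Hfg; simpl; [reflexivity|].
  rewrite IH by (intros; apply Hfg; lia).
  rewrite Hfg by lia. reflexivity.
Qed.

Lemma D_fuel_indep (p : R) :
  forall n m i j, (i + j <= n)%nat -> (i + j <= m)%nat ->
  D_fuel n p i j = D_fuel m p i j.
Proof.
  induction n as [|n IH]; intros m i j Hn Hm.
  - assert (i = 0%nat /\ j = 0%nat) as [-> ->] by lia.
    destruct m; reflexivity.
  - destruct m as [|m].
    + assert (i = 0%nat /\ j = 0%nat) as [-> ->] by lia. reflexivity.
    + simpl. destruct (Nat.eqb i j); [reflexivity|].
      rewrite (sumR_ext (fun k => D_fuel n p i k) (fun k => D_fuel m p i k))
        by (intros k Hk; apply IH; lia).
      rewrite (sumR_ext (fun k => D_fuel n p j k) (fun k => D_fuel m p j k))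
        by (intros k Hk; apply IH; lia).
      reflexivity.
Qed.

Lemma Dmf_rec (p : R) (i j : nat) :
  Dmf p i j = if Nat.eqb i j then 0 else p * Smf p i j * Smf p j i.
Proof.
  unfold Dmf, Smf. destruct (Nat.eqb i j) eqn:E.
  - apply Nat.eqb_eq in E. subst. destruct (j + j)%nat; simpl; [reflexivity|].
    rewrite Nat.eqb_refl. reflexivity.
  - apply Nat.eqb_neq in E. destruct (i + j)%nat as [|n] eqn:Hn; [lia|]. simpl.
    replace (Nat.eqb i j) with false by (symmetry; apply Nat.eqb_neq; exact E).
    rewrite (sumR_ext (fun k => D_fuel n p i k) (fun k => D_fuel (i + k) p i k))
      by (intros k Hk; apply D_fuel_indep; lia).
    rewrite (sumR_ext (fun k => D_fuel n p j k) (fun k => D_fuel (j + k) p j k))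
      by (intros k Hk; apply D_fuel_indep; lia).
    reflexivity.
Qed.

Definition surv (p : R) (i j : nat) : R := Smf p (S i) (S j).

Lemma surv_first (p : R) (i : nat) : surv p i 0 = 1.
Proof. unfold surv, Smf. simpl. ring. Qed.

Lemma surv_step (p : R) (i j : nat) :
  surv p i (S j) = if Nat.eqb i j then surv p i j
                   else surv p i j * (1 - p * surv p j i).
Proof.
  unfold surv, Smf at 1. replace (S (S j) - 1)%nat with (S j) by lia.
  simpl sumR. rewrite Dmf_rec. simpl Nat.eqb.
  unfold Smf. replace (S j - 1)%nat with j by lia.
  destruct (Nat.eqb i j); ring.
Qed.

Lemma surv_bounds (p : R) (i j : nat) : 0 < p < 1 -> 0 < surv p i j <= 1.
Proof.
  intros Hp. remember (i + j)%nat as n eqn:Hn. revert i j Hn.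
  induction n as [n IH] using lt_wf_ind; intros i [|j] Hn.
  - rewrite surv_first. lra.
  - rewrite surv_step. destruct (Nat.eqb i j); [apply (IH (i + j)%nat); lia|].
    pose proof (IH (i + j)%nat ltac:(lia) i j eq_refl) as Sij.
    pose proof (IH (j + i)%nat ltac:(lia) j i eq_refl) as Sji.
    assert (0 < 1 - p * surv p j i <= 1) by nra.
    split; nra.
Qed.

(** The continuum survival function is [frac (e^{d a}) (e^{d b})]; its
    discrete analogue uses [frac] at geometric arguments [(1-p)^{-k}]. *)
Definition frac (x y : R) : R := x / (x + y - 1).

Lemma frac_bounds (x y : R) : 1 <= x -> 1 <= y -> 0 < frac x y <= 1.
Proof.
  intros Hx Hy. unfold frac. split.
  - apply Rdiv_lt_0_compat; lra.
  - apply Rmult_le_reg_r with (x + y - 1); [lra|].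
    unfold Rdiv. rewrite Rmult_assoc, Rinv_l by lra. lra.
Qed.

Lemma frac_lipschitz (x y x' y' : R) :
  1 <= x -> 1 <= y -> 1 <= x' -> 1 <= y' ->
  Rabs (frac x y - frac x' y') <= Rabs (x - x') + Rabs (y - y').
Proof.
  intros Hx Hy Hx' Hy'. unfold frac.
  set (den := (x + y - 1) * (x' + y' - 1)).
  assert (Hden : 1 <= den) by (unfold den; nra).
  replace (x / (x + y - 1) - x' / (x' + y' - 1))
    with ((x * (y' - y) + (y - 1) * (x - x')) / den) by (unfold den; field; lra).
  unfold Rdiv. rewrite Rabs_mult, Rabs_inv, (Rabs_right den) by lra.
  apply Rmult_le_reg_r with den; [lra|].
  rewrite Rmult_assoc, Rinv_l, Rmult_1_r by lra.
  eapply Rle_trans; [apply Rabs_triang|].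
  rewrite !Rabs_mult, (Rabs_right x), (Rabs_right (y - 1)) by lra.
  rewrite (Rabs_minus_sym y' y).
  pose proof (Rabs_pos (y - y')). pose proof (Rabs_pos (x - x')).
  assert (x <= den) by (unfold den; nra).
  assert (y - 1 <= den) by (unfold den; nra).
  nra.
Qed.

(** Above the diagonal the discrete recursion is satisfied exactly by [frac]:
    multiplying the second argument by [1/(1-p)] costs the factor
    [1 - p frac(., .)]. *)
Lemma frac_step_exact (p a b : R) : 0 < p < 1 -> 1 <= a -> 1 <= b ->
  frac a (b / (1 - p)) = frac a b * (1 - p * frac (b / (1 - p)) a).
Proof.
  intros Hp Ha Hb. unfold frac.
  assert (b <= b / (1 - p)).
  { apply Rmult_le_reg_r with (1 - p); [lra|]. unfold Rdiv.
    rewrite Rmult_assoc, Rinv_l by lra. nra. }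
  field. repeat split; try lra. nra.
Qed.

(** Below the diagonal the recursion holds up to an error [O(p^2)]. *)
Lemma frac_step_approx (p a b : R) : 0 < p < 1 -> 1 <= a -> 1 <= b ->
  Rabs (frac a (b / (1 - p)) - frac a b * (1 - p * frac b ((1 - p) * a)))
  <= p ^ 2 / (1 - p) ^ 2.
Proof.
  intros Hp Ha Hb. set (q := 1 - p).
  assert (Hq : 0 < q < 1) by (unfold q; lra).
  set (den := (q * a + b - q) * (a + b - 1) * (q * a + b - 1)).
  assert (Hden : q * a * b * (q * b) <= den).
  { unfold den. assert (q * b <= q * a + b - 1) by (unfold q in *; nra).
    assert (q * a <= q * a + b - q) by lra.
    assert (b <= a + b - 1) by lra.
    assert (0 < q * a) by nra.
    assert (0 < q * b) by nra.
    apply Rmult_le_compat; [nra|lra| |lra].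
    apply Rmult_le_compat; lra. }
  unfold frac.
  replace (a / (a + b / q - 1) - a / (a + b - 1) * (1 - p * (b / (b + q * a - 1))))
    with (p ^ 2 * a * b / den).
  2:{ unfold den, q. field. repeat split; unfold q in *; try lra; nra. }
  assert (0 < q * a * b * (q * b)) by (repeat apply Rmult_lt_0_compat; lra).
  assert (0 <= p ^ 2 * a * b) by (apply Rmult_le_pos; [apply Rmult_le_pos|]; nra).
  rewrite Rabs_right by (apply Rle_ge, Rle_mult_inv_pos; lra).
  apply Rmult_le_reg_r with (den * q ^ 2); [apply Rmult_lt_0_compat; nra|].
  replace (p ^ 2 * a * b / den * (den * q ^ 2)) with (p ^ 2 * a * b * q ^ 2)
    by (field; lra).
  replace (p ^ 2 / q ^ 2 * (den * q ^ 2)) with (p ^ 2 * den) by (field; lra).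
  assert (0 <= p ^ 2) by nra.
  apply Rle_trans with (p ^ 2 * (q * a * b * (q * b))); [|nra].
  replace (p ^ 2 * (q * a * b * (q * b))) with ((p ^ 2 * a * q ^ 2) * b * b) by ring.
  replace (p ^ 2 * a * b * q ^ 2) with ((p ^ 2 * a * q ^ 2) * b * 1) by ring.
  apply Rmult_le_compat_l; nra.
Qed.

(** Geometric grid [(1-p)^{-k}], the discrete counterpart of [e^{d k / N}]. *)
Definition growth (p : R) (k : nat) : R := (/ (1 - p)) ^ k.

Lemma growth_ge1 (p : R) (k : nat) : 0 < p < 1 -> 1 <= growth p k.
Proof.
  intros Hp. unfold growth. apply pow_R1_Rle.
  rewrite <- Rinv_1. apply Rinv_le_contravar; lra.
Qed.

Lemma growth_S (p : R) (k : nat) : growth p (S k) = growth p k / (1 - p).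
Proof. unfold growth. simpl. unfold Rdiv. ring. Qed.

(** The explicit approximation of [surv p i j]; the second index is shifted
    by one above the diagonal, since the step [j = i] is skipped there. *)
Definition approx (p : R) (i j : nat) : R :=
  if (j <=? i)%nat then frac (growth p i) (growth p j)
  else frac (growth p i) (growth p (j - 1)).

Lemma approx_bounds (p : R) (i j : nat) : 0 < p < 1 -> 0 < approx p i j <= 1.
Proof.
  intros Hp. unfold approx. destruct (j <=? i)%nat; apply frac_bounds; apply growth_ge1; exact Hp.
Qed.

Lemma approx_first (p : R) (i : nat) : 0 < p < 1 -> approx p i 0 = 1.
Proof.
  intros Hp. unfold approx, frac. simpl.
  pose proof (growth_ge1 p i Hp). replace (growth p 0) with 1 by reflexivity.
  field. lra.
Qed.

Lemma approx_diag_step (p : R) (i : nat) : approx p i (S i) = approx p i i.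
Proof.
  unfold approx. rewrite Nat.leb_refl.
  replace (S i <=? i)%nat with false by (symmetry; apply Nat.leb_nle; lia).
  replace (S i - 1)%nat with i by lia. reflexivity.
Qed.

Lemma approx_step (p : R) (i j : nat) : 0 < p < 1 -> i <> j ->
  Rabs (approx p i (S j) - approx p i j * (1 - p * approx p j i))
  <= p ^ 2 / (1 - p) ^ 2.
Proof.
  intros Hp Hij. unfold approx.
  destruct (Nat.lt_ge_cases i j) as [Hlt|Hge].
  - rewrite (proj2 (Nat.leb_nle (S j) i)), (proj2 (Nat.leb_nle j i)),
      (proj2 (Nat.leb_le i j)) by lia.
    destruct j as [|j]; [lia|]. replace (S (S j) - 1)%nat with (S j) by lia.
    replace (S j - 1)%nat with j by lia.
    rewrite growth_S, <- frac_step_exact by (try apply growth_ge1; lra).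
    rewrite Rminus_diag, Rabs_R0.
    apply Rle_mult_inv_pos; [apply pow2_ge_0 | apply pow_lt; lra].
  - rewrite (proj2 (Nat.leb_le (S j) i)), (proj2 (Nat.leb_le j i)),
      (proj2 (Nat.leb_nle i j)) by lia.
    destruct i as [|i]; [lia|]. replace (S i - 1)%nat with i by lia.
    replace (growth p i) with ((1 - p) * growth p (S i))
      by (rewrite growth_S; field; lra).
    rewrite (growth_S p j).
    apply frac_step_approx; [lra | apply growth_ge1 | apply growth_ge1]; lra.
Qed.

Lemma step_error (p s s' t t' tau : R) :
  0 < p < 1 -> 0 <= s' <= 1 -> 0 <= t <= 1 ->
  Rabs (s * (1 - p * s') - (t * (1 - p * t') + tau))
  <= Rabs (s - t) + p * Rabs (s' - t') + Rabs tau.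
Proof.
  intros Hp Hs' Ht.
  replace (s * (1 - p * s') - (t * (1 - p * t') + tau)) with
    ((s - t) * (1 - p * s') + (- (p * t)) * (s' - t') + (- tau)) by ring.
  eapply Rle_trans; [apply Rabs_triang|]. rewrite Rabs_Ropp.
  apply Rplus_le_compat_r.
  eapply Rle_trans; [apply Rabs_triang|].
  rewrite !Rabs_mult, Rabs_Ropp, Rabs_mult.
  rewrite (Rabs_right (1 - p * s')), (Rabs_right p), (Rabs_right t) by nra.
  pose proof (Rabs_pos (s - t)). pose proof (Rabs_pos (s' - t')).
  assert (0 <= 1 - p * s' <= 1) by nra.
  apply Rplus_le_compat; [nra|].
  rewrite Rmult_assoc. apply Rmult_le_compat_l; nra.
Qed.

(** Error budget: the solution of [B(n+1) = (1+p) B(n) + p^2/(1-p)^2],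
    [B(0) = 0]. *)
Definition budget (p : R) (n : nat) : R := / (1 - p) ^ 2 * p * ((1 + p) ^ n - 1).

Lemma budget_nonneg (p : R) (n : nat) : 0 < p < 1 -> 0 <= budget p n.
Proof.
  intros Hp. unfold budget.
  pose proof (pow_R1_Rle (1 + p) n ltac:(lra)).
  apply Rmult_le_pos; [apply Rmult_le_pos|]; try lra.
  apply Rlt_le, Rinv_0_lt_compat, pow_lt. lra.
Qed.

Lemma budget_step (p : R) (n : nat) : p < 1 ->
  budget p (S n) = budget p n + p * budget p n + p ^ 2 / (1 - p) ^ 2.
Proof. intros Hp. unfold budget. simpl pow. field. lra. Qed.

Lemma surv_approx_error (p : R) (i j : nat) : 0 < p < 1 ->
  Rabs (surv p i j - approx p i j) <= budget p (i + j).
Proof.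
  intros Hp. remember (i + j)%nat as n eqn:Hn. revert i j Hn.
  induction n as [n IH] using lt_wf_ind; intros i [|j] Hn; subst n.
  - rewrite surv_first, approx_first, Rminus_diag, Rabs_R0 by exact Hp.
    apply budget_nonneg; exact Hp.
  - replace (i + S j)%nat with (S (i + j)) by lia.
    rewrite budget_step by lra.
    pose proof (budget_nonneg p (i + j) Hp).
    assert (Hpp : 0 <= p ^ 2 / (1 - p) ^ 2)
      by (apply Rle_mult_inv_pos; [apply pow2_ge_0 | apply pow_lt; lra]).
    rewrite surv_step. destruct (Nat.eqb i j) eqn:E.
    + apply Nat.eqb_eq in E. subst j. rewrite approx_diag_step.
      pose proof (IH (i + i)%nat ltac:(lia) i i eq_refl). nra.
    + apply Nat.eqb_neq in E.
      pose proof (IH (i + j)%nat ltac:(lia) i j eq_refl) as Eij.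
      pose proof (IH (j + i)%nat ltac:(lia) j i eq_refl) as Eji.
      rewrite Nat.add_comm in Eji.
      set (tau := approx p i (S j) - approx p i j * (1 - p * approx p j i)).
      replace (approx p i (S j)) with (approx p i j * (1 - p * approx p j i) + tau)
        by (unfold tau; ring).
      pose proof (surv_bounds p j i Hp) as Sji.
      pose proof (approx_bounds p i j Hp) as Aij.
      eapply Rle_trans; [apply step_error; lra|].
      pose proof (approx_step p i j Hp E) as Etau. fold tau in Etau.
      repeat apply Rplus_le_compat; try assumption.
      apply Rmult_le_compat_l; lra.
Qed.

Lemma exp_INR_mult (x : R) (k : nat) : exp (INR k * x) = exp x ^ k.
Proof.
  induction k as [|k IH]; [simpl; rewrite Rmult_0_l, exp_0; reflexivity|].
  rewrite S_INR, Rmult_plus_distr_r, Rmult_1_l, exp_plus, IH. simpl. ring.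
Qed.

(** [budget p n <= 4 p e^{n p}] for [p <= 1/2]: the discrete error is [O(1/N)]
    uniformly for [n <= 2N]. *)
Lemma budget_le_exp (p : R) (n : nat) : 0 < p <= 1/2 ->
  budget p n <= 4 * p * exp (INR n * p).
Proof.
  intros Hp. unfold budget. rewrite exp_INR_mult.
  assert (Hq : 0 < / (1 - p) ^ 2 <= 4).
  { split; [apply Rinv_0_lt_compat; nra|].
    replace 4 with (/ / 4) by (field; lra). apply Rinv_le_contravar; nra. }
  assert (Hpow : (1 + p) ^ n <= exp p ^ n)
    by (apply pow_incr; split; [lra | apply exp_ineq1_le]).
  pose proof (pow_R1_Rle (1 + p) n ltac:(lra)).
  apply Rle_trans with (4 * p * ((1 + p) ^ n - 1)); [|nra].
  replace (4 * p * ((1 + p) ^ n - 1)) with (4 * (p * ((1 + p) ^ n - 1))) by ring.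
  rewrite Rmult_assoc. apply Rmult_le_compat_r; nra.
Qed.

Lemma exp_monotone (x y : R) : x <= y -> exp x <= exp y.
Proof. intros [H|H]; [apply Rlt_le, exp_increasing; exact H | subst; lra]. Qed.

Lemma exp_increment (u v : R) : u <= v -> exp v - exp u <= exp v * (v - u).
Proof.
  intros Huv. assert (exp u = exp v * exp (u - v)) by (rewrite <- exp_plus; f_equal; ring).
  pose proof (exp_ineq1_le (u - v)). pose proof (exp_pos v). nra.
Qed.

Lemma growth_lower (p : R) (k : nat) : 0 < p < 1 -> exp (INR k * p) <= growth p k.
Proof.
  intros Hp. rewrite exp_INR_mult. unfold growth.
  apply pow_incr. split; [apply Rlt_le, exp_pos|].
  pose proof (exp_ineq1_le (- p)) as Hm. rewrite exp_Ropp in Hm.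
  pose proof (exp_pos p).
  replace (exp p) with (/ / exp p) by (field; lra).
  apply Rinv_le_contravar; lra.
Qed.

Lemma growth_upper (p : R) (k : nat) : 0 < p < 1 ->
  growth p k <= exp (INR k * (p / (1 - p))).
Proof.
  intros Hp. rewrite exp_INR_mult. unfold growth.
  apply pow_incr. split; [apply Rlt_le, Rinv_0_lt_compat; lra|].
  replace (/ (1 - p)) with (1 + p / (1 - p)) by (field; lra).
  apply exp_ineq1_le.
Qed.

Definition growth_const (d : R) : R := 2 * (d + 1) * exp (2 * d + 1).

Lemma growth_near_exp (d p y : R) (k : nat) :
  0 < d -> 0 < p <= 1/2 -> 0 <= y <= d -> INR k * p <= y <= INR k * p + 2 * p ->
  Rabs (growth p k - exp y) <= growth_const d * p.
Proof.
  intros Hd Hp Hy Hk.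
  set (u := INR k * p) in *.
  assert (Hu0 : 0 <= u) by (unfold u; apply Rmult_le_pos; [apply pos_INR | lra]).
  pose proof (growth_lower p k ltac:(lra)) as Hlow. fold u in Hlow.
  pose proof (growth_upper p k ltac:(lra)) as Hup.
  replace (INR k * (p / (1 - p))) with (u / (1 - p)) in Hup by (unfold u; field; lra).
  assert (Hr : p / (1 - p) <= 2 * p /\ 0 <= p / (1 - p)).
  { split; [|apply Rle_mult_inv_pos; lra].
    apply Rmult_le_reg_r with (1 - p); [lra|]. unfold Rdiv.
    rewrite Rmult_assoc, Rinv_l by lra. nra. }
  assert (Hq : u / (1 - p) = u + u * (p / (1 - p))) by (field; lra).
  assert (Eup : exp (u / (1 - p)) - exp u <= exp (2 * d + 1) * (2 * d * p)).
  { eapply Rle_trans; [apply exp_increment; nra|].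
    apply Rmult_le_compat; [apply Rlt_le, exp_pos | nra | apply exp_monotone; nra | nra]. }
  assert (Ey : exp y - exp u <= exp (2 * d + 1) * (2 * p)).
  { eapply Rle_trans; [apply exp_increment; lra|].
    apply Rmult_le_compat; [apply Rlt_le, exp_pos | lra | apply exp_monotone; lra | lra]. }
  pose proof (exp_monotone u y ltac:(lra)).
  pose proof (exp_pos (2 * d + 1)).
  unfold growth_const. apply Rabs_le. split; nra.
Qed.

Lemma fl_spec (N : nat) (a : R) : 0 <= a ->
  INR (fl N a) <= INR N * a < INR (fl N a) + 1.
Proof.
  intros Ha. unfold fl.
  assert (HNa : 0 <= INR N * a) by (apply Rmult_le_pos; [apply pos_INR | exact Ha]).
  destruct (base_Int_part (INR N * a)) as [H1 H2].
  assert (H0 : (0 <= Int_part (INR N * a))%Z).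
  { apply le_IZR. apply Rnot_lt_le. intro Hneg.
    apply lt_IZR in Hneg. apply Z.lt_le_pred in Hneg.
    apply IZR_le in Hneg. simpl in Hneg. lra. }
  rewrite INR_IZR_INZ, Z2Nat.id by exact H0. lra.
Qed.

Lemma fl_scaled (d : R) (N : nat) (a : R) : 0 < d -> 0 < INR N -> 0 <= a ->
  INR (fl N a) * (d / INR N) <= d * a < INR (fl N a) * (d / INR N) + d / INR N.
Proof.
  intros Hd HN Ha. destruct (fl_spec N a Ha) as [H1 H2].
  assert (0 < d / INR N) by (apply Rdiv_lt_0_compat; lra).
  replace (d * a) with ((INR N * a) * (d / INR N)) by (field; lra).
  replace (INR (fl N a) * (d / INR N) + d / INR N)
    with ((INR (fl N a) + 1) * (d / INR N)) by ring.
  split; [apply Rmult_le_compat_r | apply Rmult_lt_compat_r]; lra.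
Qed.

Lemma growth_at_fl (d : R) (N : nat) (b : R) (k : nat) :
  0 < d -> 0 < INR N -> d / INR N <= 1/2 -> 0 <= b < 1 ->
  (k = fl N b \/ S k = fl N b) ->
  Rabs (growth (d / INR N) k - exp (d * b)) <= growth_const d * (d / INR N).
Proof.
  intros Hd HN Hp Hb Hk.
  assert (0 < d / INR N) by (apply Rdiv_lt_0_compat; lra).
  destruct (fl_scaled d N b Hd HN ltac:(lra)) as [H1 H2].
  apply growth_near_exp; [lra | lra | split; nra |].
  destruct Hk as [-> | Hk]; [lra|]. rewrite <- Hk, S_INR in H1, H2. lra.
Qed.

Lemma surv_near_frac (d : R) (N : nat) (a b : R) :
  0 < d -> 0 < INR N -> d / INR N <= 1/2 -> 0 <= a < 1 -> 0 <= b < 1 ->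
  Rabs (surv (d / INR N) (fl N a) (fl N b) - frac (exp (d * a)) (exp (d * b)))
  <= 4 * (d / INR N) * exp (2 * d) + 2 * (growth_const d * (d / INR N)).
Proof.
  intros Hd HN Hp Ha Hb.
  destruct (fl_scaled d N a Hd HN ltac:(lra)) as [Ia _].
  destruct (fl_scaled d N b Hd HN ltac:(lra)) as [Jb _].
  pose proof (growth_at_fl d N a (fl N a) Hd HN Hp Ha (or_introl eq_refl)) as Ga.
  set (p := d / INR N) in *. set (I := fl N a) in *. set (J := fl N b) in *.
  assert (Hp0 : 0 < p) by (unfold p; apply Rdiv_lt_0_compat; lra).
  assert (Ediscrete : Rabs (surv p I J - approx p I J) <= 4 * p * exp (2 * d)).
  { eapply Rle_trans; [apply surv_approx_error; lra|].
    eapply Rle_trans; [apply budget_le_exp; lra|].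
    apply Rmult_le_compat_l; [lra|]. apply exp_monotone.
    assert (d * a <= d /\ d * b <= d) by (split; nra).
    rewrite plus_INR. lra. }
  assert (Ea : 1 <= exp (d * a)) by (rewrite <- exp_0; apply exp_monotone; nra).
  assert (Eb : 1 <= exp (d * b)) by (rewrite <- exp_0; apply exp_monotone; nra).
  assert (Ecoarse : Rabs (approx p I J - frac (exp (d * a)) (exp (d * b)))
                    <= 2 * (growth_const d * p)).
  { unfold approx. destruct (J <=? I)%nat eqn:EJ.
    - pose proof (growth_at_fl d N b J Hd HN Hp Hb (or_introl eq_refl)) as Gb.
      fold p in Gb.
      eapply Rle_trans; [apply frac_lipschitz; try apply growth_ge1; lra|]. lra.
    - assert (HJ : S (J - 1) = J) by (apply Nat.leb_nle in EJ; lia).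
      pose proof (growth_at_fl d N b (J - 1) Hd HN Hp Hb (or_intror HJ)) as Gb.
      fold p in Gb.
      eapply Rle_trans; [apply frac_lipschitz; try apply growth_ge1; lra|]. lra. }
  replace (surv p I J - frac (exp (d * a)) (exp (d * b))) with
    ((surv p I J - approx p I J) + (approx p I J - frac (exp (d * a)) (exp (d * b))))
    by ring.
  eapply Rle_trans; [apply Rabs_triang|]. lra.
Qed.

Lemma Dinf_sym (d a b : R) : Dinf d a b = Dinf d b a.
Proof. unfold Dinf. rewrite Rabs_minus_sym, Rmin_comm. reflexivity. Qed.

Lemma Dinf_as_frac (d a b : R) : 0 < d -> 0 <= a -> 0 <= b ->
  Dinf d a b = d * frac (exp (d * a)) (exp (d * b)) * frac (exp (d * b)) (exp (d * a)).
Proof.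
  intros Hd Ha Hb.
  assert (Hord : forall x y, 0 <= x <= y ->
    Dinf d x y = d * frac (exp (d * x)) (exp (d * y)) * frac (exp (d * y)) (exp (d * x))).
  { intros x y Hxy. unfold Dinf, frac.
    rewrite Rabs_right, Rmin_left by lra.
    assert (Ex : 1 <= exp (d * x)) by (rewrite <- exp_0; apply exp_monotone; nra).
    assert (Ey : 1 <= exp (d * y)) by (rewrite <- exp_0; apply exp_monotone; nra).
    replace (exp (d * (y - x))) with (exp (d * y) / exp (d * x))
      by (unfold Rdiv; rewrite <- exp_Ropp, <- exp_plus; f_equal; ring).
    replace (exp (- d * x)) with (/ exp (d * x))
      by (rewrite <- exp_Ropp; f_equal; ring).
    replace (1 - / exp (d * x) + exp (d * y) / exp (d * x))
      with ((exp (d * x) + exp (d * y) - 1) / exp (d * x)) by (field; lra).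
    field. lra. }
  destruct (Rle_lt_dec a b) as [Hab|Hab].
  - apply Hord; lra.
  - rewrite Dinf_sym, Hord by lra. ring.
Qed.

(** Both branches of [Dtilde] are [d] times a product of survival quantities
    (on the diagonal this is the convention [D = p S(i,i)^2]). *)
Lemma Dtilde_as_surv (d : R) (N : nat) (a b : R) : 0 < INR N ->
  Dtilde d N a b =
  d * surv (d / INR N) (fl N a) (fl N b) * surv (d / INR N) (fl N b) (fl N a).
Proof.
  intros HN. unfold Dtilde, iN, surv. rewrite !Nat.add_1_r.
  destruct (Nat.eqb (fl N a) (fl N b)) eqn:E.
  - apply Nat.eqb_eq in E. rewrite <- E. field. lra.
  - rewrite Dmf_rec. simpl Nat.eqb. rewrite E. field. lra.
Qed.

Lemma product_lipschitz (x1 x2 y1 y2 : R) : 0 <= x2 <= 1 -> 0 <= y1 <= 1 ->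
  Rabs (x1 * x2 - y1 * y2) <= Rabs (x1 - y1) + Rabs (x2 - y2).
Proof.
  intros Hx2 Hy1.
  replace (x1 * x2 - y1 * y2) with ((x1 - y1) * x2 + y1 * (x2 - y2)) by ring.
  eapply Rle_trans; [apply Rabs_triang|].
  rewrite !Rabs_mult, (Rabs_right x2), (Rabs_right y1) by lra.
  pose proof (Rabs_pos (x1 - y1)). pose proof (Rabs_pos (x2 - y2)).
  apply Rplus_le_compat; nra.
Qed.

Definition rate_const (d : R) : R := 2 * (4 * exp (2 * d) + 2 * growth_const d).

Lemma Dtilde_error (d : R) (N : nat) (a b : R) :
  0 < d -> 2 * d <= INR N -> 0 <= a < 1 -> 0 <= b < 1 ->
  Rabs (Dtilde d N a b - Dinf d a b) <= d * (d / INR N) * rate_const d.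
Proof.
  intros Hd HN Ha Hb.
  assert (HN0 : 0 < INR N) by lra.
  assert (Hp : d / INR N <= 1/2).
  { apply Rmult_le_reg_r with (INR N); [lra|]. unfold Rdiv.
    rewrite Rmult_assoc, Rinv_l by lra. lra. }
  pose proof (surv_near_frac d N a b Hd HN0 Hp Ha Hb) as Eab.
  pose proof (surv_near_frac d N b a Hd HN0 Hp Hb Ha) as Eba.
  rewrite Dtilde_as_surv, Dinf_as_frac by lra.
  set (p := d / INR N) in *.
  assert (Hp0 : 0 < p) by (unfold p; apply Rdiv_lt_0_compat; lra).
  assert (Ea : 1 <= exp (d * a)) by (rewrite <- exp_0; apply exp_monotone; nra).
  assert (Eb : 1 <= exp (d * b)) by (rewrite <- exp_0; apply exp_monotone; nra).
  pose proof (surv_bounds p (fl N b) (fl N a) ltac:(lra)).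
  pose proof (frac_bounds (exp (d * a)) (exp (d * b)) Ea Eb).
  rewrite !Rmult_assoc, <- Rmult_minus_distr_l, Rabs_mult, (Rabs_right d) by lra.
  apply Rmult_le_compat_l; [lra|].
  eapply Rle_trans; [apply product_lipschitz; lra|].
  unfold rate_const. lra.
Qed.

Theorem theorem1 (d : R) (hd : 0 < d) :
  forall eps : R, 0 < eps ->
  exists N0 : nat, forall N : nat, (N0 <= N)%nat -> d < INR N ->
  forall a b : R, 0 <= a < 1 -> 0 <= b < 1 ->
  Rabs (Dtilde d N a b - Dinf d a b) < eps.
Proof.
  intros eps Heps.
  assert (HC : 0 < rate_const d).
  { unfold rate_const, growth_const.
    pose proof (exp_pos (2 * d)). pose proof (exp_pos (2 * d + 1)). nra. }
  destruct (INR_unbounded (Rmax (2 * d) (d * d * rate_const d / eps))) as [N0 HN0].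
  exists N0. intros N HN _ a b Ha Hb.
  pose proof (le_INR N0 N HN).
  pose proof (Rmax_l (2 * d) (d * d * rate_const d / eps)).
  pose proof (Rmax_r (2 * d) (d * d * rate_const d / eps)) as Hbig.
  eapply Rle_lt_trans; [apply Dtilde_error; lra|].
  replace (d * (d / INR N) * rate_const d) with (d * d * rate_const d / INR N)
    by (field; lra).
  apply Rmult_lt_reg_r with (INR N / eps); [apply Rdiv_lt_0_compat; lra|].
  replace (d * d * rate_const d / INR N * (INR N / eps))
    with (d * d * rate_const d / eps) by (field; lra).
  replace (eps * (INR N / eps)) with (INR N) by (field; lra).
  lra.
Qed.
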